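(* Let $v \in \mathbb{R}$ and $x > 0$, and for $t \ge 0$ define $$f_{v,x}(t) = \cosh(vt)\,\exp(-x\cosh t), \qquad g_{v,x}(t) = \log f_{v,x}(t) = \log\cosh(vt) - x\cosh t .$$ Then: (i) if $v^2 \le x$, the function $g_{v,x}$ is monotonically decreasing on $[0,\infty)$, so its maximum on $[0,\infty)$ is attained at $t_p = 0$; (ii) if $v^2 > x$, the function $g_{v,x}$ has exactly one peak on $[0,\infty)$: there is a unique $t_p > 0$ with $g'_{v,x}(t_p) = 0$, and $g'_{v,x}(t) > 0$ for $0 < t < t_p$ and $g'_{v,x}(t) < 0$ for $t > t_p$. Moreover, in either case, letting $t_p$ be the maximizer of $f_{v,x}$ on $[0,\infty)$, for every $\epsilon \in (0,1)$ the set $\{t \ge 0 : f_{v,x}(t) \ge \epsilon\, f_{v,x}(t_p)\}$ is a single closed bounded interval $[t_0, t_1]$ with $0 \le t_0 \le t_p \le t_1$.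
   Context: These functions arise from the integral representation $K_v(x) = \int_0^\infty f_{v,x}(t)\,dt$ of the modified Bessel function of the second kind, so the variable $t$ ranges over $[0,\infty)$. *)

From Stdlib Require Import Reals.
From Coquelicot Require Import Coquelicot.
Open Scope R_scope.

Definition fvx (v x t : R) : R := cosh (v * t) * exp (- (x * cosh t)).

Definition gvx (v x t : R) : R := ln (cosh (v * t)) - x * cosh t.

From Stdlib Require Import Reals Lra Psatz.
From Coquelicot Require Import Coquelicot.
Open Scope R_scope.

(* The derivative g'(t) = v tanh(vt) - x sinh t vanishes at 0, and
   g''(t) = v^2 / cosh^2(vt) - x cosh t is strictly decreasing on [0, oo), so g' is
   strictly concave there.  If g''(0) = v^2 - x <= 0, then g' < 0 on (0, oo).
   Otherwise g' starts out positive and, being bounded by |v| - x t, eventually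
   falls below -1, so it has exactly one positive zero tp.  Hence g increases up
   to its peak, decreases afterwards and tends to -oo; as f = exp g, the
   superlevel sets of f are superlevel sets of g, i.e. intervals around the peak. *)

Lemma MVT_derive (f df : R -> R) (s t : R) :
  (forall u, is_derive f u (df u)) -> s < t ->
  exists c, s < c < t /\ f t - f s = df c * (t - s).
Proof.
  intros Hf Hst.
  destruct (MVT_cor2 f df s t Hst) as [c [Ec Hc]].
  - intros c _; apply is_derive_Reals, Hf.
  - exists c; split; assumption.
Qed.

Lemma derive_pos_increasing (f df : R -> R) (a b : R) :
  (forall u, is_derive f u (df u)) -> (forall u, a < u < b -> 0 < df u) ->
  forall s t, a <= s -> s < t -> t <= b -> f s < f t.
Proof.
  intros Hf Hdf s t Has Hst Htb.
  destruct (MVT_derive f df s t Hf Hst) as [c [Hc Ec]].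
  specialize (Hdf c ltac:(lra)); nra.
Qed.

Lemma derive_neg_decreasing (f df : R -> R) (a : R) :
  (forall u, is_derive f u (df u)) -> (forall u, a < u -> df u < 0) ->
  forall s t, a <= s -> s < t -> f t < f s.
Proof.
  intros Hf Hdf s t Has Hst.
  destruct (MVT_derive f df s t Hf Hst) as [c [Hc Ec]].
  specialize (Hdf c ltac:(lra)); nra.
Qed.

Lemma continuity_of_derive (f df : R -> R) :
  (forall u, is_derive f u (df u)) -> continuity f.
Proof.
  intros Hf t; apply continuity_pt_filterlim.
  apply (ex_derive_continuous f t); exists (df t); apply Hf.
Qed.

Lemma IVT_sign_change (f : R -> R) (a b y : R) :
  continuity f -> a <= b -> (f a - y) * (f b - y) <= 0 ->
  exists c, a <= c <= b /\ f c = y.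
Proof.
  intros Hf Hab Hy.
  destruct (IVT_gen f a b y Hf) as [c [Hc Ec]].
  - unfold Rmin, Rmax; destruct (Rle_dec (f a) (f b)); split; nra.
  - exists c; split; [|assumption].
    unfold Rmin, Rmax in Hc; destruct (Rle_dec a b); lra.
Qed.

Lemma derive_le_neg1_unbounded_below (f df : R -> R) (T0 : R) :
  (forall u, is_derive f u (df u)) -> (forall u, T0 <= u -> df u <= -1) ->
  forall T C, exists t, T <= t /\ f t < C.
Proof.
  intros Hf Hdf T C.
  pose proof (Rmax_l T T0); pose proof (Rmax_r T T0).
  set (S := Rmax T T0) in *.
  pose proof (Rle_abs (- C)); pose proof (Rle_abs (f S)); rewrite Rabs_Ropp in *.
  pose proof (Rabs_pos C); pose proof (Rabs_pos (f S)).
  set (t := S + Rabs C + Rabs (f S) + 1).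
  assert (HSt : S < t) by (unfold t; lra).
  destruct (MVT_derive f df S t Hf HSt) as [c [Hc Ec]].
  exists t; split; [lra|].
  specialize (Hdf c ltac:(lra)).
  assert (Et : t - S = Rabs C + Rabs (f S) + 1) by (unfold t; ring).
  assert (f t <= f S - (t - S)) by nra.
  lra.
Qed.

Section ConcaveFromOrigin.

Variables h dh : R -> R.
Hypothesis h_derive : forall u, is_derive h u (dh u).
Hypothesis dh_continuous : continuity dh.
Hypothesis dh_decreasing : forall s t, 0 <= s -> s < t -> dh t < dh s.
Hypothesis h_0 : h 0 = 0.

Lemma nonpos_then_decreasing s t : 0 < s -> s < t -> h s <= 0 -> h t < h s.
Proof.
  intros Hs Hst Hhs.
  destruct (MVT_derive h dh 0 s h_derive Hs) as [c1 [Hc1 E1]].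
  destruct (MVT_derive h dh s t h_derive Hst) as [c2 [Hc2 E2]].
  pose proof (dh_decreasing c1 c2 ltac:(lra) ltac:(lra)).
  rewrite h_0, !Rminus_0_r in E1.
  assert (dh c1 <= 0) by nra.
  nra.
Qed.

Lemma deriv0_nonpos_neg : dh 0 <= 0 -> forall t, 0 < t -> h t < 0.
Proof.
  intros H0 t Ht.
  destruct (MVT_derive h dh 0 t h_derive Ht) as [c [Hc Ec]].
  pose proof (dh_decreasing 0 c ltac:(lra) ltac:(lra)).
  rewrite h_0, !Rminus_0_r in Ec; nra.
Qed.

Lemma deriv0_pos_single_crossing : 0 < dh 0 -> forall T, 0 < T -> h T < 0 ->
  exists tp, 0 < tp /\ h tp = 0 /\
    (forall t, 0 < t -> h t = 0 -> t = tp) /\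
    (forall t, 0 < t -> t < tp -> 0 < h t) /\
    (forall t, tp < t -> h t < 0).
Proof.
  intros H0 T HT HhT.
  destruct (MVT_derive h dh 0 T h_derive HT) as [c [Hc Ec]].
  rewrite h_0, !Rminus_0_r in Ec.
  assert (Hdhc : dh c < 0) by nra.
  destruct (IVT_sign_change dh 0 c 0 dh_continuous ltac:(lra) ltac:(nra))
    as [s0 [Hs0 Es0]].
  assert (Hs0pos : 0 < s0) by (destruct (Req_dec s0 0) as [->|]; lra).
  assert (Hhs0 : 0 < h s0).
  { destruct (MVT_derive h dh 0 s0 h_derive Hs0pos) as [c' [Hc' Ec']].
    pose proof (dh_decreasing c' s0 ltac:(lra) ltac:(lra)).
    rewrite h_0, !Rminus_0_r in Ec'; nra. }
  destruct (IVT_sign_change h s0 T 0 (continuity_of_derive h dh h_derive)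
              ltac:(lra) ltac:(nra)) as [tp [Htp Etp]].
  assert (Hs0tp : s0 < tp) by (destruct (Req_dec tp s0) as [->|]; lra).
  assert (Hafter : forall t, tp < t -> h t < 0).
  { intros t Ht; rewrite <- Etp; apply nonpos_then_decreasing; lra. }
  assert (Hbefore : forall t, 0 < t -> t < tp -> 0 < h t).
  { intros t Ht Http; apply Rnot_le_lt; intros Hle.
    pose proof (nonpos_then_decreasing t tp Ht Http Hle); lra. }
  exists tp; repeat split; try lra; try assumption.
  intros t Ht Eht.
  destruct (Rtotal_order t tp) as [Hlt|[Heq|Hgt]]; [|assumption|].
  - specialize (Hbefore t Ht Hlt); lra.
  - specialize (Hafter t Hgt); lra.
Qed.

End ConcaveFromOrigin.

Section UnimodalSuperlevel.

Variables (g : R -> R) (T : R).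
Hypothesis g_continuous : continuity g.
Hypothesis T_nonneg : 0 <= T.
Hypothesis g_increasing : forall s t, 0 <= s -> s < t -> t <= T -> g s < g t.
Hypothesis g_decreasing : forall s t, T <= s -> s < t -> g t < g s.
Hypothesis g_unbounded_below : forall C, exists t, T <= t /\ g t < C.

Lemma unimodal_max t : 0 <= t -> g t <= g T.
Proof.
  intros Ht; destruct (Rtotal_order t T) as [Hlt|[->|Hgt]].
  - left; apply g_increasing; lra.
  - lra.
  - left; apply g_decreasing; lra.
Qed.

Lemma unimodal_superlevel_left C : C <= g T ->
  exists t0, 0 <= t0 <= T /\ forall t, 0 <= t <= T -> (C <= g t <-> t0 <= t).
Proof.
  intros HC.
  assert (Hmono : forall t0 t, 0 <= t0 <= T -> 0 <= t <= T -> g t0 <= g t -> t0 <= t).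
  { intros t0 t Ht0 Ht Hg; apply Rnot_lt_le; intros Hlt.
    pose proof (g_increasing t t0 ltac:(lra) Hlt ltac:(lra)); lra. }
  destruct (Rle_or_lt C (g 0)) as [H0|H0].
  - exists 0; split; [lra|]; intros t Ht; split; [lra|]; intros _.
    destruct (Req_dec t 0) as [->|]; [lra|].
    pose proof (g_increasing 0 t ltac:(lra) ltac:(lra) ltac:(lra)); lra.
  - destruct (IVT_sign_change g 0 T C g_continuous T_nonneg ltac:(nra))
      as [t0 [Ht0 Et0]].
    exists t0; split; [assumption|]; intros t Ht; split.
    + rewrite <- Et0; apply Hmono; assumption.
    + intros Hle; rewrite <- Et0.
      destruct (Req_dec t0 t) as [->|]; [lra|].
      left; apply g_increasing; lra.
Qed.

Lemma unimodal_superlevel_right C : C <= g T ->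
  exists t1, T <= t1 /\ forall t, T <= t -> (C <= g t <-> t <= t1).
Proof.
  intros HC.
  destruct (g_unbounded_below C) as [tb [Htb Hgtb]].
  destruct (IVT_sign_change g T tb C g_continuous Htb ltac:(nra)) as [t1 [Ht1 Et1]].
  exists t1; split; [lra|]; intros t Ht; rewrite <- Et1; split.
  - intros Hg; apply Rnot_lt_le; intros Hlt.
    pose proof (g_decreasing t1 t ltac:(lra) Hlt); lra.
  - intros Hle; destruct (Req_dec t t1) as [->|]; [lra|].
    left; apply g_decreasing; lra.
Qed.

Lemma unimodal_superlevel_interval C : C <= g T ->
  exists t0 t1, 0 <= t0 <= T /\ T <= t1 /\
    forall t, (0 <= t /\ C <= g t) <-> t0 <= t <= t1.
Proof.
  intros HC.
  destruct (unimodal_superlevel_left C HC) as [t0 [Ht0 Hleft]].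
  destruct (unimodal_superlevel_right C HC) as [t1 [Ht1 Hright]].
  exists t0, t1; split; [assumption|split; [assumption|]]; intros t.
  destruct (Rle_or_lt t T) as [HtT|HtT]; split.
  - intros [Ht Hg]; apply (Hleft t) in Hg; lra.
  - intros Ht; split; [lra|]; apply Hleft; lra.
  - intros [Ht Hg]; apply (Hright t) in Hg; lra.
  - intros Ht; split; [lra|]; apply Hright; lra.
Qed.

End UnimodalSuperlevel.

Lemma cosh_pos u : 0 < cosh u.
Proof. unfold cosh; pose proof (exp_pos u); pose proof (exp_pos (- u)); lra. Qed.

Lemma Rabs_sinh_lt_cosh u : Rabs (sinh u) < cosh u.
Proof.
  unfold sinh, cosh; pose proof (exp_pos u); pose proof (exp_pos (- u)).
  apply Rabs_def1; lra.
Qed.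

Lemma cosh_Rabs u : cosh (Rabs u) = cosh u.
Proof.
  unfold Rabs; destruct (Rcase_abs u); [|reflexivity].
  unfold cosh; rewrite Ropp_involutive; lra.
Qed.

Lemma is_derive_cosh u : is_derive cosh u (sinh u).
Proof. apply is_derive_Reals, derivable_pt_lim_cosh. Qed.

Lemma is_derive_sinh u : is_derive sinh u (cosh u).
Proof. apply is_derive_Reals, derivable_pt_lim_sinh. Qed.

Lemma cosh_lt a b : 0 <= a -> a < b -> cosh a < cosh b.
Proof.
  intros Ha Hab.
  apply (derive_pos_increasing cosh sinh 0 b is_derive_cosh); try lra.
  intros u Hu; rewrite <- sinh_0; apply sinh_lt; lra.
Qed.

Lemma cosh_le_Rabs a b : Rabs a <= Rabs b -> cosh a <= cosh b.
Proof.
  intros Hab; rewrite <- (cosh_Rabs a), <- (cosh_Rabs b).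
  destruct (Rle_lt_or_eq _ _ Hab) as [Hlt|Heq]; [|rewrite Heq; lra].
  left; apply cosh_lt; [apply Rabs_pos|assumption].
Qed.

Lemma cosh_ge_1 u : 1 <= cosh u.
Proof. rewrite <- cosh_0; apply cosh_le_Rabs; rewrite Rabs_R0; apply Rabs_pos. Qed.

Lemma sinh_ge t : 0 <= t -> t <= sinh t.
Proof.
  intros Ht; destruct (Rle_lt_or_eq _ _ Ht) as [Hpos|Heq]; [|rewrite <- Heq, sinh_0; lra].
  destruct (MVT_derive sinh cosh 0 t is_derive_sinh Hpos) as [c [_ Ec]].
  rewrite sinh_0 in Ec; pose proof (cosh_ge_1 c); nra.
Qed.

Definition dgvx (v x t : R) : R := v * sinh (v * t) / cosh (v * t) - x * sinh t.
Definition d2gvx (v x t : R) : R := v ^ 2 / cosh (v * t) ^ 2 - x * cosh t.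

Section Derivatives.

Variables v x : R.

Lemma is_derive_gvx t : is_derive (gvx v x) t (dgvx v x t).
Proof.
  unfold gvx, dgvx; pose proof (cosh_pos (v * t)); unfold cosh, sinh in *.
  auto_derive; [lra|field; lra].
Qed.

Lemma Derive_gvx t : Derive (gvx v x) t = dgvx v x t.
Proof. apply is_derive_unique, is_derive_gvx. Qed.

Lemma is_derive_dgvx t : is_derive (dgvx v x) t (d2gvx v x t).
Proof.
  unfold dgvx, d2gvx; pose proof (cosh_pos (v * t)); unfold cosh, sinh in *.
  auto_derive; [lra|].
  rewrite !exp_Ropp in *; pose proof (exp_pos (v * t)); pose proof (exp_pos t).
  set (a := exp (v * t)) in *.
  field; split; [lra|split; nra].
Qed.

Lemma continuity_d2gvx : continuity (d2gvx v x).
Proof.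
  intros t; apply continuity_pt_filterlim, (ex_derive_continuous (d2gvx v x) t).
  unfold d2gvx; pose proof (cosh_pos (v * t)); unfold cosh in *.
  auto_derive; nra.
Qed.

Lemma dgvx_0 : dgvx v x 0 = 0.
Proof. unfold dgvx; rewrite Rmult_0_r, sinh_0; field; rewrite cosh_0; lra. Qed.

Lemma d2gvx_0 : d2gvx v x 0 = v ^ 2 - x.
Proof. unfold d2gvx; rewrite Rmult_0_r, cosh_0; field. Qed.

Hypothesis x_pos : 0 < x.

Lemma d2gvx_decreasing s t : 0 <= s -> s < t -> d2gvx v x t < d2gvx v x s.
Proof.
  intros Hs Hst; unfold d2gvx.
  assert (Hvst : cosh (v * s) <= cosh (v * t)).
  { apply cosh_le_Rabs; rewrite !Rabs_mult, (Rabs_right s), (Rabs_right t) by lra.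
    pose proof (Rabs_pos v); nra. }
  pose proof (cosh_lt s t Hs Hst); pose proof (cosh_pos (v * s)).
  assert (v ^ 2 / cosh (v * t) ^ 2 <= v ^ 2 / cosh (v * s) ^ 2).
  { apply Rmult_le_compat_l; [nra|].
    apply Rinv_le_contravar; [nra|apply pow_incr; lra]. }
  nra.
Qed.

Lemma dgvx_le t : 0 <= t -> dgvx v x t <= Rabs v - x * t.
Proof.
  intros Ht; unfold dgvx.
  pose proof (Rabs_sinh_lt_cosh (v * t)); pose proof (cosh_pos (v * t)).
  pose proof (Rle_abs (v * sinh (v * t))); rewrite Rabs_mult in *.
  pose proof (Rabs_pos v); pose proof (sinh_ge t Ht).
  assert (v * sinh (v * t) / cosh (v * t) <= Rabs v).
  { apply Rle_div_l; nra. }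
  nra.
Qed.

Lemma dgvx_le_neg1 : exists T, 0 < T /\ forall t, T <= t -> dgvx v x t <= -1.
Proof.
  exists ((Rabs v + 1) / x); pose proof (Rabs_pos v); split.
  - apply Rdiv_lt_0_compat; lra.
  - intros t Ht.
    assert (Hxt : Rabs v + 1 <= x * t).
    { replace (Rabs v + 1) with (x * ((Rabs v + 1) / x)) by (field; lra).
      apply Rmult_le_compat_l; lra. }
    pose proof (dgvx_le t ltac:(nra)); lra.
Qed.

End Derivatives.

Section Peak.

Variables v x : R.
Hypothesis x_pos : 0 < x.

Lemma dgvx_neg : v ^ 2 <= x -> forall t, 0 < t -> dgvx v x t < 0.
Proof.
  intros Hv; apply (deriv0_nonpos_neg (dgvx v x) (d2gvx v x)).
  - apply is_derive_dgvx.
  - apply d2gvx_decreasing, x_pos.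
  - apply dgvx_0.
  - rewrite d2gvx_0; lra.
Qed.

Lemma gvx_decreasing_of_small_v : v ^ 2 <= x ->
  forall s t, 0 <= s -> s <= t -> gvx v x t <= gvx v x s.
Proof.
  intros Hv s t Hs Hst; destruct (Rle_lt_or_eq _ _ Hst) as [Hlt|Heq].
  - left; exact (derive_neg_decreasing _ _ 0 (is_derive_gvx v x) (dgvx_neg Hv) s t Hs Hlt).
  - rewrite Heq; lra.
Qed.

Lemma dgvx_single_crossing : x < v ^ 2 ->
  exists tp, 0 < tp /\ dgvx v x tp = 0 /\
    (forall t, 0 < t -> dgvx v x t = 0 -> t = tp) /\
    (forall t, 0 < t -> t < tp -> 0 < dgvx v x t) /\
    (forall t, tp < t -> dgvx v x t < 0).
Proof.
  intros Hv; destruct (dgvx_le_neg1 v x x_pos) as [T [HT HdT]].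
  apply (deriv0_pos_single_crossing (dgvx v x) (d2gvx v x)) with T.
  - apply is_derive_dgvx.
  - apply continuity_d2gvx.
  - apply d2gvx_decreasing, x_pos.
  - apply dgvx_0.
  - rewrite d2gvx_0; lra.
  - assumption.
  - specialize (HdT T (Rle_refl T)); lra.
Qed.

Lemma gvx_unimodal : exists T, 0 <= T /\
  (forall s t, 0 <= s -> s < t -> t <= T -> gvx v x s < gvx v x t) /\
  (forall s t, T <= s -> s < t -> gvx v x t < gvx v x s).
Proof.
  destruct (Rle_or_lt (v ^ 2) x) as [Hv|Hv].
  - exists 0; split; [lra|split; [intros; lra|]].
    exact (derive_neg_decreasing _ _ 0 (is_derive_gvx v x) (dgvx_neg Hv)).
  - destruct (dgvx_single_crossing Hv) as [tp [Htp [_ [_ [Hbefore Hafter]]]]].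
    exists tp; split; [lra|split].
    + apply (derive_pos_increasing _ _ 0 tp (is_derive_gvx v x)).
      intros u Hu; apply Hbefore; lra.
    + exact (derive_neg_decreasing _ _ tp (is_derive_gvx v x) Hafter).
Qed.

Lemma gvx_unbounded_below T C : exists t, T <= t /\ gvx v x t < C.
Proof.
  destruct (dgvx_le_neg1 v x x_pos) as [T0 [_ HdT0]].
  exact (derive_le_neg1_unbounded_below _ _ T0 (is_derive_gvx v x) HdT0 T C).
Qed.

End Peak.

Lemma fvx_exp_gvx v x t : fvx v x t = exp (gvx v x t).
Proof.
  unfold fvx, gvx, Rminus; rewrite exp_plus, exp_ln by apply cosh_pos.
  rewrite Ropp_mult_distr_l; reflexivity.
Qed.

Lemma exp_le_exp_iff a b : exp a <= exp b <-> a <= b.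
Proof.
  split; intros H; apply Rnot_lt_le; intros Hlt.
  - pose proof (exp_increasing _ _ Hlt); lra.
  - pose proof (exp_lt_inv _ _ Hlt); lra.
Qed.

Lemma fvx_superlevel_iff v x eps s t : 0 < eps ->
  (eps * fvx v x s <= fvx v x t <-> ln eps + gvx v x s <= gvx v x t).
Proof.
  intros Heps; rewrite !fvx_exp_gvx, <- (exp_ln eps) at 1 by assumption.
  rewrite <- exp_plus; apply exp_le_exp_iff.
Qed.

Theorem mainTheorem1 (v x : R) (hx : 0 < x) :
  (* (i) *)
  (v ^ 2 <= x ->
     (forall s t, 0 <= s -> s <= t -> gvx v x t <= gvx v x s) /\
     (forall t, 0 <= t -> gvx v x t <= gvx v x 0)) /\
  (* (ii) *)
  (x < v ^ 2 ->
     exists tp, 0 < tp /\ Derive (gvx v x) tp = 0 /\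
       (forall t, 0 < t -> Derive (gvx v x) t = 0 -> t = tp) /\
       (forall t, 0 < t -> t < tp -> 0 < Derive (gvx v x) t) /\
       (forall t, tp < t -> Derive (gvx v x) t < 0)) /\
  (* moreover: a maximizer exists, and every superlevel set is an interval *)
  (exists tp, 0 <= tp /\ forall t, 0 <= t -> fvx v x t <= fvx v x tp) /\
  (forall tp, 0 <= tp -> (forall t, 0 <= t -> fvx v x t <= fvx v x tp) ->
     forall eps, 0 < eps < 1 ->
       exists t0 t1, 0 <= t0 <= tp /\ tp <= t1 /\
         forall t, (0 <= t /\ eps * fvx v x tp <= fvx v x t) <-> t0 <= t <= t1).
Proof.
  destruct (gvx_unimodal v x hx) as [T [HT [Hincr Hdecr]]].
  pose proof (unimodal_max (gvx v x) T Hincr Hdecr) as Hmax.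
  split; [|split; [|split]].
  - intros Hv; pose proof (gvx_decreasing_of_small_v v x hx Hv) as Hdecr0.
    split; [assumption|]; intros t Ht; apply Hdecr0; lra.
  - intros Hv; setoid_rewrite Derive_gvx; apply dgvx_single_crossing; assumption.
  - exists T; split; [assumption|]; intros t Ht.
    rewrite !fvx_exp_gvx, exp_le_exp_iff; apply Hmax, Ht.
  - intros tp Htp _ eps Heps.
    assert (HC : ln eps + gvx v x tp < gvx v x tp).
    { pose proof (ln_increasing eps 1 ltac:(lra) ltac:(lra)); rewrite ln_1 in *; lra. }
    destruct (unimodal_superlevel_interval (gvx v x) T
                (continuity_of_derive _ _ (is_derive_gvx v x)) HT Hincr Hdecr
                (gvx_unbounded_below v x hx T) (ln eps + gvx v x tp)
                ltac:(pose proof (Hmax tp Htp); lra))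
      as [t0 [t1 [Ht0 [Ht1 Hiff]]]].
    destruct (proj1 (Hiff tp) (conj Htp (Rlt_le _ _ HC))) as [Ht0tp Htpt1].
    exists t0, t1; split; [lra|split; [lra|]]; intros t.
    rewrite fvx_superlevel_iff by lra; apply Hiff.
Qed.
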